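(* Fix $a\in\mathbb{R}$ and $r>0$, and let $k^{\rm opt}_0=a+\sqrt{a^2+1/r}$. For $T>0$ small enough that $aT<1$, let $k^{\rm opt}_T$ denote the minimizer of $J_T(k)=(1+rk^2)f_{a,T}(k)$ over $k\in(a,k_u(a,T))$. Then $$\lim_{T\to0^+}\frac{k^{\rm opt}_T}{k^{\rm opt}_0-\left(a\,k^{\rm opt}_0+\frac1r\right)T}=1 .$$
   Context: For real $a$ and $T>0$ with $aT<1$, $k_u(a,T)$ is the unique solution $k>|a|$ of $T\sqrt{k^2-a^2}=\arccos(a/k)$; the interval $(a,k_u(a,T))$ is exactly the set of real gains $k$ for which $\dot x(t)=ax(t)-kx(t-T)$ is exponentially stable. For such $k$, $f_{a,T}(k)=\int_{-\infty}^{+\infty}\left|j\omega-a+ke^{-jT\omega}\right|^{-2}d\omega$, the squared $\mathcal H_2$-norm of $1/(s-a+ke^{-Ts})$. $(1+rk^2)f_{a,T}(k)$ is the squared $\mathcal H_2$-norm from $v$ to $z=(x,\sqrt r\,u)$ for $\dot x=ax+u+v$, $u(t)=-kx(t-T)$. Note $k^{\rm opt}_0$ is the optimal gain of the delay-free ($T=0$) problem. *)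

From Stdlib Require Import Reals Lra ClassicalEpsilon.
From Coquelicot Require Import Coquelicot.
Open Scope R_scope.

(* k_u(a,T): the (unique, by the paper's context) k > |a| with
   T * sqrt(k^2 - a^2) = arccos(a/k); chosen by Hilbert's epsilon. *)
Definition ku_spec (a T k : R) : Prop :=
  Rabs a < k /\ T * sqrt (k ^ 2 - a ^ 2) = acos (a / k).

Definition k_u (a T : R) : R := epsilon (inhabits 0) (ku_spec a T).

(* The complex number  j*w - a + k*e^{-j T w}  (as an element of Coquelicot's C). *)
Definition char_fun (a T k w : R) : C :=
  Cplus (Cminus ((0, w) : C) (RtoC a)) (Cmult (RtoC k) ((cos (T * w), - sin (T * w)) : C)).

Definition f_aT (a T k : R) : R :=
  RInt_gen (fun w => / (Cmod (char_fun a T k w)) ^ 2)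
    (Rbar_locally m_infty) (Rbar_locally p_infty).

Definition J_T (a r T k : R) : R := (1 + r * k ^ 2) * f_aT a T k.

Definition kopt0 (a r : R) : R := a + sqrt (a ^ 2 + / r).

(* Writing [jw - a + k e^{-jTw} = (k - a + jw) + k (e^{-jTw} - 1)] with [|e^{-jTw} - 1| <= |Tw|]
   gives [(1 -+ |k| T)^2 ((k - a)^2 + w^2)] as lower and upper bounds for the squared modulus,
   hence [f_{a,T}(k) = PI / (k - a) (1 + O(T))] and [J_T(k) = J_0(k) (1 + O(T))] locally uniformly
   in [k], with [J_0(k) = PI (1 + r k^2) / (k - a)] the delay-free cost.  A cruder bound makes
   [J_T] grow linearly in [k], so the optimal gains stay bounded; since
   [J_0(k) = J_0(kopt0) + PI r (k - kopt0)^2 / (k - a)], the inequality [J_T(kopt_T) <= J_T(kopt0)]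
   forces [kopt_T -> kopt0].  The denominator of the ratio also tends to [kopt0], so the ratio
   tends to 1.  Gains below [k_u] have no imaginary characteristic root, which makes
   [f_{a,T}] a convergent integral: a root would put [T sqrt (k^2 - a^2) - acos (a / k)] at or
   above 0, and this function changes sign only once, at [k_u]. *)

From Stdlib Require Import Reals Lra Psatz Classical ClassicalEpsilon.
From Coquelicot Require Import Coquelicot.
Open Scope R_scope.

Lemma Rabs_sin_le x : Rabs (sin x) <= Rabs x.
Proof.
  assert (Hpos : forall y, 0 <= y -> Rabs (sin y) <= y).
  { intros y Hy. destruct (Req_dec y 0) as [->|Hy0]; [rewrite sin_0, Rabs_R0; lra|].
    pose proof (sin_lt_x y ltac:(lra)).
    destruct (Rle_dec y PI) as [HyPI|HyPI].
    - rewrite Rabs_right by (apply Rle_ge, sin_ge_0; lra). lra.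
    - pose proof (SIN_bound y). pose proof PI2_3_2.
      unfold Rabs; destruct Rcase_abs; lra. }
  destruct (Rle_dec 0 x) as [Hx|Hx].
  - rewrite (Rabs_right x) by lra. auto.
  - rewrite <- Rabs_Ropp, <- sin_neg, (Rabs_left x) by lra. apply Hpos. lra.
Qed.

Lemma one_sub_cos_le x : 2 - 2 * cos x <= x ^ 2.
Proof.
  replace x with (2 * (x / 2)) at 1 by field.
  rewrite cos_2a_sin.
  pose proof (Rabs_sin_le (x / 2)) as H.
  assert (sin (x / 2) ^ 2 <= (x / 2) ^ 2).
  { rewrite <- (pow2_abs (sin _)), <- (pow2_abs (x / 2)).
    pose proof (Rabs_pos (sin (x / 2))). nra. }
  nra.
Qed.

Definition unit_rot (t : R) : C := (cos t, - sin t).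

Lemma char_fun_split a T k w :
  char_fun a T k w = ((((k - a)%R, w) : C) + RtoC k * (unit_rot (T * w) - 1))%C.
Proof.
  unfold char_fun, unit_rot, Cplus, Cminus, Cmult, Copp, RtoC; simpl.
  f_equal; ring.
Qed.

Lemma Cmod_unit_rot_sub1_sq t : Cmod (unit_rot t - 1) ^ 2 = 2 - 2 * cos t.
Proof.
  unfold Cmod, unit_rot, Cminus, Cplus, Copp, RtoC; cbn [fst snd].
  pose proof (sin2_cos2 t) as E; unfold Rsqr in E.
  rewrite pow2_sqrt by nra. nra.
Qed.

Lemma Cmod_unit_rot_sub1_le t : Cmod (unit_rot t - 1) <= Rmin (Rabs t) 2.
Proof.
  pose proof (Cmod_unit_rot_sub1_sq t) as E. pose proof (Cmod_ge_0 (unit_rot t - 1)).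
  pose proof (one_sub_cos_le t). pose proof (COS_bound t). rewrite <- (pow2_abs t) in *.
  pose proof (Rabs_pos t).
  apply Rmin_glb; nra.
Qed.

Lemma Cmod_pair_ge_abs_snd (x y : R) : Rabs y <= Cmod ((x, y) : C).
Proof. pose proof (Rmax_Cmod (x, y)). pose proof (Rmax_r (Rabs x) (Rabs y)). simpl in *. lra. Qed.

Lemma Cmod_reverse_triangle (x y : C) : Rabs (Cmod (x + y) - Cmod x) <= Cmod y.
Proof.
  pose proof (Cmod_triangle x y).
  pose proof (Cmod_triangle (x + y) (- y)) as Hxy.
  replace (x + y + - y)%C with x in Hxy by (unfold Cplus, Copp; destruct x, y; cbn; f_equal; ring).
  rewrite Cmod_opp in Hxy. apply Rabs_le. lra.
Qed.

Lemma Cmod_char_fun_dev a T k w : 0 <= T ->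
  Rabs (Cmod (char_fun a T k w) - Cmod (((k - a)%R, w) : C))
  <= Rabs k * Rmin (T * Cmod (((k - a)%R, w) : C)) 2.
Proof.
  intros HT. rewrite char_fun_split.
  eapply Rle_trans; [apply Cmod_reverse_triangle|].
  rewrite Cmod_mult, Cmod_R. apply Rmult_le_compat_l; [apply Rabs_pos|].
  eapply Rle_trans; [apply Cmod_unit_rot_sub1_le|].
  apply Rle_min_compat_r. rewrite Rabs_mult, (Rabs_right T) by lra.
  apply Rmult_le_compat_l; [lra|apply Cmod_pair_ge_abs_snd].
Qed.

Lemma is_lim_atan_p_infty : is_lim atan p_infty (PI / 2).
Proof.
  apply (is_lim_ext_loc (fun x => PI / 2 - atan (/ x))).
  { exists 0. intros x Hx. rewrite atan_inv by lra. ring. }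
  apply (is_lim_minus _ _ _ (PI / 2) (atan 0)); [apply is_lim_const| |].
  2:{ unfold is_Rbar_minus, is_Rbar_plus; simpl. rewrite atan_0. do 2 f_equal. ring. }
  apply is_lim_comp_continuous; [|apply continuous_atan].
  change (Finite 0) with (Rbar_inv p_infty). apply is_lim_inv; [apply is_lim_id|discriminate].
Qed.

Lemma is_lim_atan_m_infty : is_lim atan m_infty (- (PI / 2)).
Proof.
  apply (is_lim_ext (fun x => - atan (- x))); [intros x; rewrite atan_opp; ring|].
  apply (is_lim_opp (fun x => atan (- x)) m_infty (PI / 2)).
  eapply is_lim_comp; [apply is_lim_atan_p_infty| |].
  - apply (is_lim_opp (fun x => x) m_infty m_infty), is_lim_id.
  - exists 0. intros x _. discriminate.
Qed.

Lemma is_RInt_gen_inv_quadratic M b : 0 < M -> 0 < b ->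
  is_RInt_gen (fun w => / (M * (w ^ 2 + b ^ 2)))
    (Rbar_locally m_infty) (Rbar_locally p_infty) (PI / (M * b)).
Proof.
  intros HM Hb.
  set (F := fun w => atan (w / b) / (M * b)).
  assert (HF : forall w, is_derive F w (/ (M * (w ^ 2 + b ^ 2)))).
  { intros w. unfold F. auto_derive; [nra|]. field. split; [nra|lra]. }
  assert (Hlim : forall (x : Rbar) (l : R), x = m_infty \/ x = p_infty ->
                   is_lim atan x l -> is_lim F x (l / (M * b))).
  { intros x l Hx Hl. unfold F.
    apply (is_lim_scal_r (fun w => atan (w / b)) (/ (M * b)) x l).
    eapply is_lim_comp; [exact Hl| |].
    - replace x with (Rbar_mult x (/ b)) at 2.
      + apply (is_lim_scal_r (fun w => w)), is_lim_id.
      + assert (0 < / b) by (apply Rinv_0_lt_compat; lra).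
        destruct Hx; subst; simpl; destruct Rle_dec; try lra;
          destruct Rle_lt_or_eq_dec; auto; lra.
    - destruct Hx; subst; exists 0; intros; discriminate. }
  replace (PI / (M * b)) with (PI / 2 / (M * b) - - (PI / 2) / (M * b)) by (field; lra).
  apply (is_RInt_gen_ext (Derive F)).
  - apply filter_forall. intros ab w _. apply is_derive_unique, HF.
  - apply is_RInt_gen_Derive.
    + apply filter_forall. intros ab w _. eexists; apply HF.
    + apply filter_forall. intros ab w _.
      apply (continuous_ext (fun w => / (M * (w ^ 2 + b ^ 2)))).
      { intros; symmetry; apply is_derive_unique, HF. }
      apply (ex_derive_continuous (K := R_AbsRing) (V := R_NormedModule)).
      auto_derive. apply Rgt_not_eq, Rmult_lt_0_compat; nra.
    + exact (Hlim _ _ (or_introl eq_refl) is_lim_atan_m_infty).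
    + exact (Hlim _ _ (or_intror eq_refl) is_lim_atan_p_infty).
Qed.

Lemma is_RInt_gen_le (f g : R -> R) (lf lg : R) :
  (forall w, 0 <= f w <= g w) ->
  is_RInt_gen f (Rbar_locally m_infty) (Rbar_locally p_infty) lf ->
  is_RInt_gen g (Rbar_locally m_infty) (Rbar_locally p_infty) lg -> lf <= lg.
Proof.
  intros Hfg Hf Hg.
  assert (H : norm lf <= lg).
  { apply (RInt_gen_norm (V := R_CompleteNormedModule) (Fa := Rbar_locally m_infty)
      (Fb := Rbar_locally p_infty) f g lf lg); auto.
    - apply (Filter_prod _ _ _ (fun x => x < 0) (fun y => 0 < y));
        [simpl; exists 0; auto|simpl; exists 0; auto|simpl; intros; lra].
    - apply filter_forall. intros ab w _.
      change (Rabs (f w) <= g w). rewrite Rabs_right; apply Hfg || (apply Rle_ge, Hfg). }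
  change (Rabs lf <= lg) in H. pose proof (RRle_abs lf). lra.
Qed.

Lemma RInt_mono_interval (f : R -> R) (x' x y y' : R) :
  (forall w, continuous f w) -> (forall w, 0 <= f w) ->
  x' <= x -> x <= y -> y <= y' -> RInt f x y <= RInt f x' y'.
Proof.
  intros Hc Hpos Hx Hxy Hy.
  assert (Hex : forall u v, ex_RInt f u v)
    by (intros; apply (ex_RInt_continuous (V := R_CompleteNormedModule)); auto).
  rewrite <- (RInt_Chasles f x' x y') by auto.
  rewrite <- (RInt_Chasles f x y y') by auto.
  pose proof (RInt_ge_0 f x' x Hx (Hex _ _) (fun w _ => Hpos w)).
  pose proof (RInt_ge_0 f y y' Hy (Hex _ _) (fun w _ => Hpos w)).
  change (RInt f x y <= RInt f x' x + (RInt f x y + RInt f y y')). lra.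
Qed.

(* The improper integral is the supremum of the integrals over compact intervals. *)
Lemma ex_RInt_gen_nonneg_bounded (f : R -> R) (B : R) :
  (forall w, continuous f w) -> (forall w, 0 <= f w) ->
  (forall x y, x <= y -> RInt f x y <= B) ->
  ex_RInt_gen f (Rbar_locally m_infty) (Rbar_locally p_infty).
Proof.
  intros Hc Hpos HB.
  set (E := fun v => exists x y, x <= y /\ v = RInt f x y).
  destruct (completeness E) as [l [Hub Hlub]].
  { exists B. intros v (x & y & Hxy & ->). auto. }
  { exists (RInt f 0 0), 0, 0. split; [lra|reflexivity]. }
  exists l. intros P [eps HP].
  assert (Hex : exists x0 y0, x0 <= y0 /\ l - eps < RInt f x0 y0).
  { apply NNPP. intros Hn.
    assert (Hl : is_upper_bound E (l - eps)).
    { intros v (x & y & Hxy & ->). apply Rnot_lt_le. intros Hlt. apply Hn. exists x, y. auto. }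
    apply Hlub in Hl. destruct eps; simpl in *; lra. }
  destruct Hex as (x0 & y0 & Hxy0 & Hl0).
  apply (Filter_prod _ _ _ (fun x => x < x0) (fun y => y0 < y));
    [simpl; exists x0; auto|simpl; exists y0; auto|].
  intros x y Hx Hy. exists (RInt f x y). split.
  - apply (RInt_correct (V := R_CompleteNormedModule)).
    apply (ex_RInt_continuous (V := R_CompleteNormedModule)). auto.
  - apply HP. change (Rabs (RInt f x y - l) < eps).
    assert (RInt f x y <= l) by (apply Hub; exists x, y; split; [lra|reflexivity]).
    pose proof (RInt_mono_interval f x x0 y0 y Hc Hpos ltac:(lra) Hxy0 ltac:(lra)).
    rewrite Rabs_left1 by lra. destruct eps; simpl in *; lra.
Qed.

Lemma ex_RInt_gen_dominated (f : R -> R) (C : R) :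
  (forall w, continuous f w) -> (forall w, 0 <= f w) -> (forall w, f w <= C / (w ^ 2 + 1)) ->
  ex_RInt_gen f (Rbar_locally m_infty) (Rbar_locally p_infty).
Proof.
  intros Hc Hpos Hdom.
  apply (ex_RInt_gen_nonneg_bounded f (C * PI)); auto.
  intros x y Hxy.
  assert (HC : 0 <= C) by (specialize (Hdom 0); specialize (Hpos 0);
    replace (0 ^ 2 + 1) with 1 in Hdom by ring; lra).
  assert (Hg : is_RInt (fun w => C / (w ^ 2 + 1)) x y (C * atan y - C * atan x)).
  { apply (is_RInt_derive (fun w => C * atan w)).
    - intros w _. auto_derive; auto. field. nra.
    - intros w _. apply (ex_derive_continuous (K := R_AbsRing) (V := R_NormedModule)).
      auto_derive. apply Rgt_not_eq. nra. }
  eapply Rle_trans.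
  - apply (RInt_le f (fun w => C / (w ^ 2 + 1)) x y Hxy).
    + apply (ex_RInt_continuous (V := R_CompleteNormedModule)). auto.
    + eexists. exact Hg.
    + intros w _. apply Hdom.
  - rewrite (is_RInt_unique _ _ _ _ Hg).
    pose proof (atan_bound x). pose proof (atan_bound y). nra.
Qed.

Lemma char_fun_eq a T k w :
  char_fun a T k w = (((k * cos (T * w) - a)%R, (w - k * sin (T * w))%R) : C).
Proof. unfold char_fun, Cplus, Cminus, Cmult, Copp, RtoC; simpl. f_equal; ring. Qed.

Lemma Cmod_pair_sq (x y : R) : Cmod ((x, y) : C) ^ 2 = x ^ 2 + y ^ 2.
Proof. unfold Cmod; cbn [fst snd]. apply pow2_sqrt. nra. Qed.

Section CharFunBounds.
Variables (a T k w : R).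
Hypothesis HT : 0 <= T.

Let dev_bounds :
  let q := Cmod (char_fun a T k w) in let rho := Cmod (((k - a)%R, w) : C) in
  rho ^ 2 = w ^ 2 + (k - a) ^ 2 /\ 0 <= q /\ 0 <= rho /\
  rho - Rabs k * Rmin (T * rho) 2 <= q <= rho + Rabs k * Rmin (T * rho) 2.
Proof.
  intros q rho. pose proof (Cmod_char_fun_dev a T k w HT) as Hd.
  apply Rabs_le_between in Hd. fold q rho in Hd.
  split; [unfold rho; rewrite Cmod_pair_sq; ring|].
  split; [apply Cmod_ge_0|]. split; [apply Cmod_ge_0|lra].
Qed.

Lemma Cmod_char_fun_sq_le :
  Cmod (char_fun a T k w) ^ 2 <= (1 + Rabs k * T) ^ 2 * (w ^ 2 + (k - a) ^ 2).
Proof.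
  destruct dev_bounds as (Hrho & Hq & Hr & _ & Hd).
  pose proof (Rmin_l (T * Cmod (((k - a)%R, w) : C)) 2). pose proof (Rabs_pos k).
  rewrite <- Hrho.
  assert (Cmod (char_fun a T k w) <= (1 + Rabs k * T) * Cmod (((k - a)%R, w) : C)) by nra.
  nra.
Qed.

Lemma Cmod_char_fun_sq_ge : Rabs k * T <= 1 ->
  (1 - Rabs k * T) ^ 2 * (w ^ 2 + (k - a) ^ 2) <= Cmod (char_fun a T k w) ^ 2.
Proof.
  intros HkT. destruct dev_bounds as (Hrho & Hq & Hr & Hd & _).
  pose proof (Rmin_l (T * Cmod (((k - a)%R, w) : C)) 2). pose proof (Rabs_pos k).
  rewrite <- Hrho.
  assert ((1 - Rabs k * T) * Cmod (((k - a)%R, w) : C) <= Cmod (char_fun a T k w)) by nra.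
  rewrite <- Rpow_mult_distr. apply pow_incr. split; [apply Rmult_le_pos|]; lra.
Qed.

Lemma Cmod_char_fun_sq_le_const :
  Cmod (char_fun a T k w) ^ 2 <= 2 * (w ^ 2 + ((k - a) ^ 2 + 4 * k ^ 2)).
Proof.
  destruct dev_bounds as (Hrho & Hq & Hr & _ & Hd).
  pose proof (Rmin_r (T * Cmod (((k - a)%R, w) : C)) 2). pose proof (Rabs_pos k).
  rewrite <- (pow2_abs k).
  replace (w ^ 2 + ((k - a) ^ 2 + 4 * Rabs k ^ 2)) with
    (Cmod (((k - a)%R, w) : C) ^ 2 + 4 * Rabs k ^ 2) by (rewrite Hrho; ring).
  assert (Cmod (char_fun a T k w) <= Cmod (((k - a)%R, w) : C) + 2 * Rabs k) by nra.
  pose proof (pow2_ge_0 (Cmod (((k - a)%R, w) : C) - 2 * Rabs k)).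
  assert (Cmod (char_fun a T k w) ^ 2 <= (Cmod (((k - a)%R, w) : C) + 2 * Rabs k) ^ 2)
    by (apply pow_incr; lra).
  nra.
Qed.

End CharFunBounds.

Lemma Cmod_char_fun_ge_abs a T k w : Rabs w - Rabs k <= Cmod (char_fun a T k w).
Proof.
  rewrite char_fun_eq. eapply Rle_trans; [|apply Cmod_pair_ge_abs_snd].
  pose proof (Rabs_triang_inv w (k * sin (T * w))).
  rewrite Rabs_mult in H. pose proof (Rabs_pos k).
  assert (Rabs (sin (T * w)) <= 1) by (apply Rabs_le; apply SIN_bound).
  nra.
Qed.

Definition no_imaginary_root (a T k : R) : Prop := forall w, char_fun a T k w <> 0%C.

Section Integrand.
Variables (a T k : R).
Hypothesis Hroot : no_imaginary_root a T k.

Let q2_pos w : 0 < Cmod (char_fun a T k w) ^ 2.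
Proof. apply pow_lt, Cmod_gt_0, Hroot. Qed.

Lemma Cmod_char_fun_sq_continuous w : continuous (fun w => Cmod (char_fun a T k w) ^ 2) w.
Proof.
  apply (continuous_ext (fun w => (k * cos (T * w) - a) ^ 2 + (w - k * sin (T * w)) ^ 2)).
  { intros x. rewrite char_fun_eq, Cmod_pair_sq. reflexivity. }
  apply (ex_derive_continuous (K := R_AbsRing) (V := R_NormedModule)). auto_derive. auto.
Qed.

Lemma integrand_continuous w : continuous (fun w => / Cmod (char_fun a T k w) ^ 2) w.
Proof.
  apply continuous_Rinv_comp; [apply Cmod_char_fun_sq_continuous|].
  apply Rgt_not_eq, q2_pos.
Qed.

Lemma integrand_dominated : exists C, forall w, / Cmod (char_fun a T k w) ^ 2 <= C / (w ^ 2 + 1).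
Proof.
  set (L := 2 * Rabs k + 1).
  set (h := fun w => (w ^ 2 + 1) / Cmod (char_fun a T k w) ^ 2).
  assert (HL : -L <= L) by (pose proof (Rabs_pos k); unfold L; lra).
  destruct (continuity_ab_maj h (- L) L HL) as [wM [HM _]].
  { intros w _. apply continuity_pt_filterlim.
    apply (continuous_mult (fun w => w ^ 2 + 1)); [|apply integrand_continuous].
    apply (ex_derive_continuous (K := R_AbsRing) (V := R_NormedModule)). auto_derive. auto. }
  exists (Rmax (h wM) 4). intros w.
  assert (Hw : 0 < w ^ 2 + 1) by nra.
  pose proof (q2_pos w).
  replace (/ Cmod (char_fun a T k w) ^ 2) with (h w / (w ^ 2 + 1))
    by (unfold h; field; split; [apply Rgt_not_eq, Cmod_gt_0, Hroot|lra]).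
  apply Rmult_le_compat_r; [apply Rlt_le, Rinv_0_lt_compat; lra|].
  destruct (Rle_dec (Rabs w) L) as [HwL|HwL].
  - eapply Rle_trans; [apply HM; apply Rabs_le_between; lra|apply Rmax_l].
  - (* far from the origin the imaginary part [w - k sin (T w)] dominates *)
    eapply Rle_trans; [|apply Rmax_r].
    pose proof (Cmod_char_fun_ge_abs a T k w). pose proof (Rabs_pos k).
    assert (Hq : (w ^ 2 + 1) / 4 <= Cmod (char_fun a T k w) ^ 2).
    { rewrite <- (pow2_abs w). unfold L in HwL.
      assert ((Rabs w - Rabs k) ^ 2 <= Cmod (char_fun a T k w) ^ 2) by (apply pow_incr; lra).
      nra. }
    unfold h. apply Rcomplements.Rle_div_l; lra.
Qed.

Lemma is_RInt_gen_f_aT :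
  is_RInt_gen (fun w => / Cmod (char_fun a T k w) ^ 2)
    (Rbar_locally m_infty) (Rbar_locally p_infty) (f_aT a T k).
Proof.
  apply (RInt_gen_correct (V := R_CompleteNormedModule)).
  destruct integrand_dominated as [C HC].
  apply (ex_RInt_gen_dominated _ C); auto using integrand_continuous.
  intros w. apply Rlt_le, Rinv_0_lt_compat, q2_pos.
Qed.

End Integrand.

Section CostIntegralBounds.
Variables (a T k : R).
Hypotheses (HT : 0 <= T) (Hak : a < k).

Lemma f_aT_ge : no_imaginary_root a T k ->
  PI / ((1 + Rabs k * T) ^ 2 * (k - a)) <= f_aT a T k.
Proof.
  intros Hroot. pose proof (Rabs_pos k).
  assert (HM : 0 < (1 + Rabs k * T) ^ 2) by nra.
  apply (is_RInt_gen_le (fun w => / ((1 + Rabs k * T) ^ 2 * (w ^ 2 + (k - a) ^ 2)))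
           (fun w => / Cmod (char_fun a T k w) ^ 2));
    [|apply is_RInt_gen_inv_quadratic; lra|apply is_RInt_gen_f_aT, Hroot].
  intros w. split; [apply Rlt_le, Rinv_0_lt_compat, Rmult_lt_0_compat; nra|].
  apply Rinv_le_contravar; [apply pow_lt, Cmod_gt_0, Hroot|apply Cmod_char_fun_sq_le, HT].
Qed.

Lemma f_aT_ge_const : no_imaginary_root a T k ->
  PI / (2 * sqrt ((k - a) ^ 2 + 4 * k ^ 2)) <= f_aT a T k.
Proof.
  intros Hroot.
  assert (Hb : 0 < sqrt ((k - a) ^ 2 + 4 * k ^ 2)) by (apply sqrt_lt_R0; nra).
  apply (is_RInt_gen_le (fun w => / (2 * (w ^ 2 + sqrt ((k - a) ^ 2 + 4 * k ^ 2) ^ 2)))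
           (fun w => / Cmod (char_fun a T k w) ^ 2));
    [|apply is_RInt_gen_inv_quadratic; lra|apply is_RInt_gen_f_aT, Hroot].
  intros w. rewrite pow2_sqrt by nra.
  split; [apply Rlt_le, Rinv_0_lt_compat, Rmult_lt_0_compat; nra|].
  apply Rinv_le_contravar; [apply pow_lt, Cmod_gt_0, Hroot|apply Cmod_char_fun_sq_le_const, HT].
Qed.

Lemma no_imaginary_root_small_delay : Rabs k * T < 1 -> no_imaginary_root a T k.
Proof.
  intros HkT w Hw.
  pose proof (Cmod_char_fun_sq_ge a T k w HT ltac:(lra)) as H.
  rewrite Hw, Cmod_0 in H.
  assert (0 < (1 - Rabs k * T) ^ 2 * (w ^ 2 + (k - a) ^ 2)) by (apply Rmult_lt_0_compat; nra).
  simpl in H. lra.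
Qed.

Lemma f_aT_le : Rabs k * T < 1 -> f_aT a T k <= PI / ((1 - Rabs k * T) ^ 2 * (k - a)).
Proof.
  intros HkT. pose proof (no_imaginary_root_small_delay HkT) as Hroot.
  assert (HM : 0 < (1 - Rabs k * T) ^ 2) by nra.
  apply (is_RInt_gen_le (fun w => / Cmod (char_fun a T k w) ^ 2)
           (fun w => / ((1 - Rabs k * T) ^ 2 * (w ^ 2 + (k - a) ^ 2))));
    [|apply is_RInt_gen_f_aT, Hroot|apply is_RInt_gen_inv_quadratic; lra].
  intros w. split; [apply Rlt_le, Rinv_0_lt_compat, pow_lt, Cmod_gt_0, Hroot|].
  apply Rinv_le_contravar; [apply Rmult_lt_0_compat; nra|apply Cmod_char_fun_sq_ge; lra].
Qed.

End CostIntegralBounds.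

Lemma acos_lt_acos x y : -1 <= x -> x < y -> y <= 1 -> acos y < acos x.
Proof.
  intros Hx Hxy Hy. pose proof (acos_bound x). pose proof (acos_bound y).
  apply (cos_decreasing_0 (acos x) (acos y)); try lra.
  rewrite !cos_acos; lra.
Qed.

Lemma acos_le_acos x y : -1 <= x -> x <= y -> y <= 1 -> acos y <= acos x.
Proof.
  intros Hx Hxy Hy. destruct (Req_dec x y) as [->|Hne]; [lra|].
  apply Rlt_le, acos_lt_acos; lra.
Qed.

Lemma Rabs_lt_div_bounds a k : Rabs a < k -> -1 < a / k < 1.
Proof.
  intros H. pose proof (Rabs_pos a). apply Rabs_lt_between in H.
  split; [apply Rcomplements.Rlt_div_r|apply Rcomplements.Rlt_div_l]; lra.
Qed.

Lemma sqrt_sq_sub_sq a k : Rabs a < k -> sqrt (k ^ 2 - a ^ 2) = k * sin (acos (a / k)).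
Proof.
  intros H. pose proof (Rabs_pos a). pose proof (Rabs_lt_div_bounds a k H).
  rewrite sin_acos by lra.
  rewrite <- (sqrt_pow2 k) at 2 by lra.
  rewrite <- sqrt_mult by (try nra; unfold Rsqr; nra).
  f_equal. unfold Rsqr. field. lra.
Qed.

Lemma tan_div_id_increasing x y : 0 < x -> x < y -> y < PI / 2 -> tan x / x < tan y / y.
Proof.
  intros Hx Hxy Hy. unfold tan.
  set (h := fun t => sin t / cos t / t).
  set (h' := fun t => (t - sin t * cos t) / (t * cos t) ^ 2).
  destruct (MVT_cor2 h h' x y Hxy) as [c [Hc Hcxy]].
  - intros c Hc. assert (0 < cos c) by (apply cos_gt_0; lra).
    apply is_derive_Reals. unfold h, h'. auto_derive; [split; lra|].
    pose proof (sin2_cos2 c) as E; unfold Rsqr in E.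
    replace (c - sin c * cos c) with (c * (sin c * sin c + cos c * cos c) - sin c * cos c)
      by (rewrite E; ring).
    field. split; lra.
  - assert (0 < cos c) by (apply cos_gt_0; lra).
    assert (sin c * cos c < c).
    { pose proof (sin_lt_x (2 * c) ltac:(lra)) as Hs. rewrite sin_2a in Hs. lra. }
    assert (0 < h' c) by (apply Rdiv_lt_0_compat; [lra|apply pow_lt; nra]).
    assert (0 < h' c * (y - x)) by (apply Rmult_lt_0_compat; lra).
    unfold h in Hc. lra.
Qed.

Definition ku_gap (a T k : R) : R := T * sqrt (k ^ 2 - a ^ 2) - acos (a / k).

Lemma ku_gap_polar a T k : 0 < a -> a < k ->
  0 < acos (a / k) < PI / 2 /\
  ku_gap a T k = acos (a / k) * (a * T * (tan (acos (a / k)) / acos (a / k)) - 1).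
Proof.
  intros Ha Hk. assert (Hak : Rabs a < k) by (rewrite Rabs_right; lra).
  pose proof (Rabs_lt_div_bounds a k Hak).
  assert (0 < a / k) by (apply Rdiv_lt_0_compat; lra).
  assert (Hth : 0 < acos (a / k) < PI / 2).
  { split; [apply acos_bound_lt; lra|rewrite <- acos_0; apply acos_lt_acos; lra]. }
  split; [exact Hth|].
  unfold ku_gap, tan. rewrite sqrt_sq_sub_sq, cos_acos by lra.
  field. lra.
Qed.

Lemma ku_gap_single_crossing a T k1 k2 : 0 < T -> Rabs a < k1 -> k1 < k2 ->
  0 <= ku_gap a T k1 -> 0 < ku_gap a T k2.
Proof.
  intros HT H1 H12 Hg. pose proof (Rabs_pos a).
  pose proof (Rabs_lt_div_bounds a k1 H1). pose proof (Rabs_lt_div_bounds a k2 ltac:(lra)).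
  destruct (Rle_dec a 0) as [Ha|Ha].
  - unfold ku_gap in *.
    assert (sqrt (k1 ^ 2 - a ^ 2) < sqrt (k2 ^ 2 - a ^ 2)).
    { apply sqrt_lt_1_alt. rewrite <- (pow2_abs a). split; nra. }
    assert (a / k1 <= a / k2).
    { unfold Rdiv. apply Rmult_le_compat_neg_l; auto. apply Rinv_le_contravar; lra. }
    pose proof (acos_le_acos (a / k1) (a / k2) ltac:(lra) ltac:(lra) ltac:(lra)).
    nra.
  - rewrite Rabs_right in H1 by lra.
    destruct (ku_gap_polar a T k1 ltac:(lra) ltac:(lra)) as [Th1 E1].
    destruct (ku_gap_polar a T k2 ltac:(lra) ltac:(lra)) as [Th2 ->].
    rewrite E1 in Hg.
    assert (a / k2 < a / k1) by (apply Rmult_lt_compat_l; [lra|apply Rinv_lt_contravar; nra]).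
    pose proof (acos_lt_acos (a / k2) (a / k1) ltac:(lra) ltac:(lra) ltac:(lra)).
    pose proof (tan_div_id_increasing (acos (a / k1)) (acos (a / k2))
                  ltac:(lra) ltac:(lra) ltac:(lra)).
    assert (0 < a * T) by nra.
    assert (1 <= a * T * (tan (acos (a / k1)) / acos (a / k1))).
    { apply Rnot_lt_le. intros Hlt.
      assert (0 < acos (a / k1) * (1 - a * T * (tan (acos (a / k1)) / acos (a / k1))))
        by (apply Rmult_lt_0_compat; lra).
      lra. }
    apply Rmult_lt_0_compat; [lra|nra].
Qed.

Lemma ku_gap_continuous a T k : Rabs a < k -> continuity_pt (ku_gap a T) k.
Proof.
  intros Hk. pose proof (Rabs_pos a).
  apply continuity_pt_filterlim. unfold ku_gap.
  apply (continuous_minus (fun k => T * sqrt (k ^ 2 - a ^ 2)) (fun k => acos (a / k))).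
  - apply (continuous_scal_r T (fun k => sqrt (k ^ 2 - a ^ 2))), continuous_sqrt_comp.
    apply (ex_derive_continuous (K := R_AbsRing) (V := R_NormedModule)). auto_derive. auto.
  - apply (continuous_comp (fun k => a / k) acos).
    + apply (ex_derive_continuous (K := R_AbsRing) (V := R_NormedModule)). auto_derive. lra.
    + apply continuity_pt_filterlim, derivable_continuous_pt, derivable_pt_acos.
      apply Rabs_lt_div_bounds, Hk.
Qed.

Lemma ku_gap_neg_witness a T : 0 < T -> a * T < 1 -> exists k, Rabs a < k /\ ku_gap a T k < 0.
Proof.
  intros HT HaT. pose proof (Rabs_pos a). pose proof PI2_3_2.
  destruct (Rle_dec a 0) as [Ha|Ha].
  - (* [T sqrt (k^2 - a^2) = 1 < PI / 2 <= acos (a / k)] *)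
    set (k := sqrt (a ^ 2 + (/ T) ^ 2)).
    assert (HiT : 0 < / T) by (apply Rinv_0_lt_compat; lra).
    assert (Hk : Rabs a < k).
    { unfold k. rewrite <- (sqrt_pow2 (Rabs a)) by lra. apply sqrt_lt_1_alt.
      rewrite pow2_abs. split; [apply pow2_ge_0|nra]. }
    exists k. split; [exact Hk|]. unfold ku_gap.
    replace (k ^ 2 - a ^ 2) with ((/ T) ^ 2) by (unfold k; rewrite pow2_sqrt; nra).
    rewrite sqrt_pow2, Rinv_r by lra.
    pose proof (Rabs_lt_div_bounds a k Hk).
    assert (a / k <= 0) by (apply Rmult_le_0_r; [lra|apply Rlt_le, Rinv_0_lt_compat; lra]).
    pose proof (acos_le_acos (a / k) 0 ltac:(lra) ltac:(lra) ltac:(lra)).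
    rewrite acos_0 in *. lra.
  - (* with [T k < 1]: [T sqrt (k^2 - a^2) = T k sin (acos (a / k)) < acos (a / k)] *)
    set (k := 2 * a / (1 + a * T)).
    assert (Hak : a < k) by (apply Rcomplements.Rlt_div_r; nra).
    assert (HTk : T * k < 1).
    { unfold k.
      replace (T * (2 * a / (1 + a * T))) with (2 * (a * T) / (1 + a * T)) by (field; nra).
      apply Rcomplements.Rlt_div_l; nra. }
    assert (HTk0 : 0 < T * k) by (apply Rmult_lt_0_compat; lra).
    exists k. split; [rewrite Rabs_right; lra|].
    destruct (ku_gap_polar a T k ltac:(lra) Hak) as [Hth _].
    unfold ku_gap. rewrite sqrt_sq_sub_sq by (rewrite Rabs_right; lra).
    pose proof (sin_lt_x (acos (a / k)) ltac:(lra)).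
    assert (0 < sin (acos (a / k))) by (apply sin_gt_0; lra).
    nra.
Qed.

Lemma ku_spec_exists a T : 0 < T -> a * T < 1 -> exists k, ku_spec a T k.
Proof.
  intros HT HaT. pose proof (Rabs_pos a). pose proof PI2_3_2.
  destruct (ku_gap_neg_witness a T HT HaT) as [k1 [Hk1 Hg1]].
  set (k2 := k1 + Rabs a + PI / T + 1).
  assert (HPT : 0 < PI / T) by (apply Rdiv_lt_0_compat; lra).
  assert (Hg2 : 0 < ku_gap a T k2).
  { unfold ku_gap.
    assert (PI / T < sqrt (k2 ^ 2 - a ^ 2)).
    { rewrite <- (sqrt_pow2 (PI / T)) by lra. apply sqrt_lt_1_alt.
      split; [apply pow2_ge_0|]. unfold k2. rewrite <- (pow2_abs a). nra. }
    assert (T * (PI / T) = PI) by (field; lra).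
    pose proof (acos_bound (a / k2)). nra. }
  destruct (Ranalysis5.IVT_interv (ku_gap a T) k1 k2) as [k [Hk Hk0]];
    [intros; apply ku_gap_continuous; lra|unfold k2; lra|exact Hg1|exact Hg2|].
  exists k. split; [lra|]. unfold ku_gap in Hk0. lra.
Qed.

Lemma ku_spec_k_u a T : 0 < T -> a * T < 1 -> ku_spec a T (k_u a T).
Proof. intros. unfold k_u. apply epsilon_spec, ku_spec_exists; auto. Qed.

Lemma lt_k_u_of_ku_gap_neg a T k : 0 < T -> a * T < 1 -> Rabs a < k -> ku_gap a T k < 0 ->
  k < k_u a T.
Proof.
  intros HT HaT Hk Hg.
  destruct (ku_spec_k_u a T HT HaT) as [Hku Hku0].
  destruct (Rlt_le_dec k (k_u a T)) as [|Hle]; [assumption|exfalso].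
  destruct (Req_dec k (k_u a T)) as [E|E].
  - subst k. unfold ku_gap in Hg. lra.
  - assert (0 < ku_gap a T k)
      by (apply (ku_gap_single_crossing a T (k_u a T)); unfold ku_gap; lra).
    lra.
Qed.

(* A root [j w] gives [k cos (T w) = a] and [k sin (T w) = w], so [T |w| = T sqrt (k^2 - a^2)]
   has cosine [a / k]. *)
Lemma char_fun_root_ku_gap a T k w : 0 < T -> a < k -> char_fun a T k w = 0%C ->
  Rabs a < k /\ 0 <= ku_gap a T k.
Proof.
  intros HT Hak Hw.
  rewrite char_fun_eq in Hw. injection Hw as HP HQ.
  assert (HP' : k * cos (T * w) = a) by lra.
  assert (HQ' : w = k * sin (T * w)) by lra.
  assert (Hkk : k ^ 2 = a ^ 2 + w ^ 2).
  { pose proof (sin2_cos2 (T * w)) as E. unfold Rsqr in E. rewrite <- HP'. rewrite HQ' at 2. nra. }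
  assert (Hw0 : w <> 0) by (intros ->; rewrite Rmult_0_r, cos_0 in HP'; lra).
  assert (Hw2 : 0 < w ^ 2) by (apply pow2_gt_0; auto).
  assert (Hka : Rabs a < k).
  { apply Rabs_lt_between. split; [|nra]. destruct (Rle_dec 0 a); nra. }
  split; [exact Hka|].
  pose proof (Rabs_pos a). pose proof (Rabs_pos_lt w Hw0).
  assert (HcW : cos (T * Rabs w) = a / k).
  { rewrite <- HP'. field_simplify; [|lra].
    unfold Rabs; destruct Rcase_abs; [rewrite <- cos_neg; f_equal|]; ring. }
  assert (HsW : sqrt (k ^ 2 - a ^ 2) = Rabs w).
  { rewrite Hkk. replace (a ^ 2 + w ^ 2 - a ^ 2) with (Rabs w ^ 2) by (rewrite pow2_abs; ring).
    apply sqrt_pow2, Rabs_pos. }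
  unfold ku_gap. rewrite HsW, <- HcW.
  destruct (Rle_dec (T * Rabs w) PI).
  - rewrite acos_cos by (split; [nra|lra]). lra.
  - pose proof (acos_bound (cos (T * Rabs w))). lra.
Qed.

Lemma no_imaginary_root_lt_k_u a T k : 0 < T -> a * T < 1 -> a < k < k_u a T ->
  no_imaginary_root a T k.
Proof.
  intros HT HaT [Hak Hku] w Hw.
  destruct (char_fun_root_ku_gap a T k w HT Hak Hw) as [Hka Hg].
  destruct (ku_spec_k_u a T HT HaT) as [_ Hku0].
  pose proof (ku_gap_single_crossing a T k (k_u a T) HT Hka Hku Hg).
  unfold ku_gap in *. lra.
Qed.

(* The delay-free cost: [f_{a,0}(k) = PI / (k - a)]. *)
Definition J0 (a r k : R) : R := PI * (1 + r * k ^ 2) / (k - a).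

Lemma Rabs_lt_sqrt_sq_add_inv a r : 0 < r -> Rabs a < sqrt (a ^ 2 + / r).
Proof.
  intros Hr. pose proof (Rinv_0_lt_compat r Hr).
  rewrite <- (sqrt_pow2 (Rabs a)) by apply Rabs_pos. apply sqrt_lt_1_alt.
  rewrite pow2_abs. split; [apply pow2_ge_0|lra].
Qed.

Lemma kopt0_gt a r : 0 < r -> a < kopt0 a r /\ 0 < kopt0 a r.
Proof.
  intros Hr. pose proof (Rabs_lt_sqrt_sq_add_inv a r Hr). pose proof (Rabs_pos a).
  apply Rabs_lt_between in H. unfold kopt0. lra.
Qed.

Lemma J0_pos a r k : 0 < r -> a < k -> 0 < J0 a r k.
Proof.
  intros Hr Hk. pose proof PI2_3_2. pose proof (pow2_ge_0 k).
  apply Rdiv_lt_0_compat; [apply Rmult_lt_0_compat; nra|lra].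
Qed.

(* [kopt0] minimizes [J0]: the excess cost is an exact square. *)
Lemma J0_decomp a r k : 0 < r -> a < k ->
  J0 a r k = J0 a r (kopt0 a r) + PI * r * (k - kopt0 a r) ^ 2 / (k - a).
Proof.
  intros Hr Hk. pose proof (Rabs_lt_sqrt_sq_add_inv a r Hr). pose proof (Rabs_pos a).
  assert (E : sqrt (a ^ 2 + / r) ^ 2 = a ^ 2 + / r)
    by (apply pow2_sqrt; pose proof (Rinv_0_lt_compat r Hr); nra).
  unfold J0, kopt0. set (c := sqrt (a ^ 2 + / r)) in *.
  replace (a + c - a) with c by ring.
  assert (Er : r * c ^ 2 = r * a ^ 2 + 1) by (rewrite E; field; lra).
  field_simplify_eq; [|lra].
  match goal with |- ?L = ?R =>
    assert (D : R - L = PI * (r * c ^ 2 - r * a ^ 2 - 1) * (a + c - k)) by ring end.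
  replace (r * c ^ 2 - r * a ^ 2 - 1) with 0 in D by lra. lra.
Qed.

Section CostBounds.
Variables (a r T k : R).
Hypotheses (Hr : 0 < r) (HT : 0 <= T) (Hak : a < k).

Let weight_pos : 0 < 1 + r * k ^ 2.
Proof. pose proof (pow2_ge_0 k). nra. Qed.

Lemma J_T_le_J0 : 0 < k -> k * T < 1 -> J_T a r T k <= J0 a r k / (1 - k * T) ^ 2.
Proof.
  intros Hk HkT. unfold J_T, J0.
  pose proof (f_aT_le a T k HT Hak ltac:(rewrite Rabs_right; lra)) as Hf.
  rewrite Rabs_right in Hf by lra.
  replace (PI * (1 + r * k ^ 2) / (k - a) / (1 - k * T) ^ 2) with
    ((1 + r * k ^ 2) * (PI / ((1 - k * T) ^ 2 * (k - a)))) by (field; split; nra).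
  apply Rmult_le_compat_l; lra.
Qed.

Lemma J_T_ge_J0 : no_imaginary_root a T k -> J0 a r k / (1 + Rabs k * T) ^ 2 <= J_T a r T k.
Proof.
  intros Hroot. unfold J_T, J0.
  pose proof (f_aT_ge a T k HT Hak Hroot). pose proof (Rabs_pos k).
  replace (PI * (1 + r * k ^ 2) / (k - a) / (1 + Rabs k * T) ^ 2) with
    ((1 + r * k ^ 2) * (PI / ((1 + Rabs k * T) ^ 2 * (k - a)))) by (field; split; nra).
  apply Rmult_le_compat_l; lra.
Qed.

Lemma J_T_ge_linear : Rabs a <= k -> no_imaginary_root a T k -> PI * r * k / 6 <= J_T a r T k.
Proof.
  intros Hka Hroot. unfold J_T.
  pose proof (f_aT_ge_const a T k HT Hak Hroot) as Hf.
  pose proof (Rabs_pos a). pose proof PI2_3_2. apply Rabs_le_between in Hka.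
  assert (Hs : sqrt ((k - a) ^ 2 + 4 * k ^ 2) <= 3 * k).
  { rewrite <- (sqrt_pow2 (3 * k)) by lra. apply sqrt_le_1_alt. nra. }
  assert (Hs0 : 0 < sqrt ((k - a) ^ 2 + 4 * k ^ 2)) by (apply sqrt_lt_R0; nra).
  assert (PI / (2 * (3 * k)) <= PI / (2 * sqrt ((k - a) ^ 2 + 4 * k ^ 2))).
  { apply Rmult_le_compat_l; [lra|apply Rinv_le_contravar; lra]. }
  apply Rle_trans with ((1 + r * k ^ 2) * (PI / (2 * (3 * k)))).
  - replace ((1 + r * k ^ 2) * (PI / (2 * (3 * k)))) with (PI / (6 * k) + PI * r * k / 6)
      by (field; lra).
    assert (0 < PI / (6 * k)) by (apply Rdiv_lt_0_compat; lra). lra.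
  - apply Rmult_le_compat_l; lra.
Qed.

End CostBounds.

Lemma locally_lt_of_continuous (phi : R -> R) (x c : R) :
  continuous phi x -> phi x < c -> locally x (fun y => phi y < c).
Proof. intros Hphi Hlt. exact (Hphi _ (open_lt c (phi x) Hlt)). Qed.

Lemma eventually_aT_lt_1 a : at_right 0 (fun T => a * T < 1).
Proof.
  apply filter_le_within, (locally_lt_of_continuous (fun T => a * T)); [|lra].
  apply (ex_derive_continuous (K := R_AbsRing) (V := R_NormedModule)). auto_derive. auto.
Qed.

Lemma eventually_pos : at_right 0 (fun T => 0 < T).
Proof. exists (mkposreal 1 Rlt_0_1). intros y _ Hy. exact Hy. Qed.

Lemma eventually_admissible a : at_right 0 (fun T => 0 < T /\ a * T < 1).
Proof. apply filter_and; [apply eventually_pos|apply eventually_aT_lt_1]. Qed.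

Lemma eventually_lt_k_u a k : at_right 0 (fun T => k < k_u a T).
Proof.
  destruct (Rlt_le_dec (Rabs a) k) as [Hak|Hka].
  - (* [ku_gap a T k] tends to [- acos (a / k) < 0] as [T] tends to [0] *)
    pose proof (Rabs_lt_div_bounds a k Hak).
    assert (Hgap : locally 0 (fun T => T * sqrt (k ^ 2 - a ^ 2) < acos (a / k))).
    { apply (locally_lt_of_continuous (fun T => T * sqrt (k ^ 2 - a ^ 2)));
        [|rewrite Rmult_0_l; apply acos_bound_lt; lra].
      apply (ex_derive_continuous (K := R_AbsRing) (V := R_NormedModule)). auto_derive. auto. }
    apply (filter_imp (fun T => (0 < T /\ a * T < 1) /\ T * sqrt (k ^ 2 - a ^ 2) < acos (a / k))).
    + intros T [[HT HaT] Hg]. apply lt_k_u_of_ku_gap_neg; auto. unfold ku_gap. lra.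
    + apply filter_and; [apply eventually_admissible|apply filter_le_within, Hgap].
  - apply (filter_imp (fun T => 0 < T /\ a * T < 1)); [|apply eventually_admissible].
    intros T [HT HaT]. destruct (ku_spec_k_u a T HT HaT). lra.
Qed.

Section OptimalGain.
Variables (a r : R) (kopt : R -> R).
Hypothesis hr : 0 < r.
Hypothesis hkopt : forall T, 0 < T -> a * T < 1 ->
  a < kopt T < k_u a T /\
  (forall k, a < k < k_u a T -> J_T a r T (kopt T) <= J_T a r T k).

Let k0 := kopt0 a r.

(* Beyond [K] the cost exceeds [4 * J0 a r k0 >= J_T a r T k0], by [J_T_ge_linear]. *)
Let K := Rabs a + k0 + 24 * J0 a r k0 / (PI * r).

Let J0_k0_pos : 0 < J0 a r k0.
Proof. apply J0_pos; [exact hr|apply kopt0_gt, hr]. Qed.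

Let K_sub_a_pos : 0 < K - a.
Proof.
  destruct (kopt0_gt a r hr). pose proof PI2_3_2. pose proof (RRle_abs a).
  assert (0 <= 24 * J0 a r k0 / (PI * r)) by (apply Rlt_le, Rdiv_lt_0_compat; nra).
  unfold K, k0 in *. lra.
Qed.

Lemma kopt_eventually : at_right 0 (fun T =>
  0 < T /\ a < kopt T /\ no_imaginary_root a T (kopt T) /\ k0 * T < / 2 /\
  J_T a r T (kopt T) <= J0 a r k0 / (1 - k0 * T) ^ 2).
Proof.
  destruct (kopt0_gt a r hr) as [Hak0 Hk0].
  assert (Hsmall : locally 0 (fun T => k0 * T < / 2)).
  { apply (locally_lt_of_continuous (fun T => k0 * T)); [|rewrite Rmult_0_r; lra].
    apply (ex_derive_continuous (K := R_AbsRing) (V := R_NormedModule)). auto_derive. auto. }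
  apply (filter_imp (fun T => ((0 < T /\ a * T < 1) /\ k0 < k_u a T) /\ k0 * T < / 2)).
  - intros T [[[HT HaT] Hku] HkT].
    destruct (hkopt T HT HaT) as [Hk Hmin].
    split; [exact HT|]. split; [lra|].
    split; [apply no_imaginary_root_lt_k_u; auto|]. split; [exact HkT|].
    eapply Rle_trans; [apply (Hmin k0); unfold k0 in *; lra|].
    apply J_T_le_J0; unfold k0 in *; lra.
  - repeat apply filter_and;
      [apply eventually_pos|apply eventually_aT_lt_1|apply eventually_lt_k_u|
       apply filter_le_within, Hsmall].
Qed.

Lemma kopt_le_K : at_right 0 (fun T => kopt T <= K).
Proof.
  eapply filter_imp; [|exact kopt_eventually].
  intros T (HT & Hk & Hroot & HkT & HJ).
  destruct (kopt0_gt a r hr) as [_ Hk0]. fold k0 in Hk0.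
  pose proof PI2_3_2. pose proof (Rabs_pos a).
  apply Rnot_lt_le. intros HK.
  assert (Hlin : PI * r * K / 6 < PI * r * kopt T / 6)
    by (apply Rmult_lt_compat_r; [lra|apply Rmult_lt_compat_l; nra]).
  assert (HK4 : 4 * J0 a r k0 <= PI * r * K / 6).
  { unfold K. replace (PI * r * (Rabs a + k0 + 24 * J0 a r k0 / (PI * r)) / 6)
      with (PI * r * (Rabs a + k0) / 6 + 4 * J0 a r k0) by (field; nra).
    assert (0 <= PI * r * (Rabs a + k0) / 6) by (apply Rmult_le_pos; [apply Rmult_le_pos|]; nra).
    lra. }
  assert (H4 : J0 a r k0 / (1 - k0 * T) ^ 2 <= 4 * J0 a r k0).
  { assert (0 < k0 * T) by nra.
    assert (/ 4 <= (1 - k0 * T) ^ 2) by nra.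
    apply Rcomplements.Rle_div_l; nra. }
  assert (Rabs a <= K).
  { assert (0 <= 24 * J0 a r k0 / (PI * r)) by (apply Rlt_le, Rdiv_lt_0_compat; nra).
    unfold K. lra. }
  pose proof (J_T_ge_linear a r T (kopt T) hr ltac:(lra) Hk ltac:(lra) Hroot).
  lra.
Qed.

Lemma kopt_deviation_le : at_right 0 (fun T =>
  PI * r * (kopt T - k0) ^ 2 / (K - a)
  <= (1 + K * T) ^ 2 * J0 a r k0 / (1 - k0 * T) ^ 2 - J0 a r k0).
Proof.
  eapply filter_imp; [|exact (filter_and _ _ kopt_eventually kopt_le_K)].
  intros T [(HT & Hk & Hroot & HkT & HJ) HkK].
  destruct (kopt0_gt a r hr) as [_ Hk0]. fold k0 in Hk0.
  pose proof PI2_3_2. pose proof (Rabs_pos (kopt T)).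
  assert (HabsK : Rabs (kopt T) <= K).
  { assert (0 <= 24 * J0 a r k0 / (PI * r)) by (apply Rlt_le, Rdiv_lt_0_compat; nra).
    pose proof (Rabs_pos a). pose proof (RRle_abs (- a)). rewrite Rabs_Ropp in *.
    apply Rabs_le_between. unfold K in *. lra. }
  assert (Hlow : J0 a r (kopt T) <= (1 + K * T) ^ 2 * J0 a r k0 / (1 - k0 * T) ^ 2).
  { pose proof (J_T_ge_J0 a r T (kopt T) hr ltac:(lra) Hk Hroot) as Hge.
    assert (0 < 1 + Rabs (kopt T) * T) by nra.
    replace (J0 a r (kopt T)) with
      (J0 a r (kopt T) / (1 + Rabs (kopt T) * T) ^ 2 * (1 + Rabs (kopt T) * T) ^ 2) by (field; lra).
    replace ((1 + K * T) ^ 2 * J0 a r k0 / (1 - k0 * T) ^ 2) with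
      (J0 a r k0 / (1 - k0 * T) ^ 2 * (1 + K * T) ^ 2) by (field; nra).
    apply Rmult_le_compat; [|nra|lra|apply pow_incr; nra].
    apply Rlt_le, Rdiv_lt_0_compat; [apply J0_pos; auto|nra]. }
  rewrite (J0_decomp a r (kopt T) hr Hk) in Hlow. fold k0 in Hlow.
  assert (PI * r * (kopt T - k0) ^ 2 / (K - a) <= PI * r * (kopt T - k0) ^ 2 / (kopt T - a)).
  { apply Rmult_le_compat_l; [apply Rmult_le_pos; [apply Rmult_le_pos|apply pow2_ge_0]; lra|].
    apply Rinv_le_contravar; lra. }
  lra.
Qed.

Lemma kopt_cvg : filterlim kopt (at_right 0) (locally k0).
Proof.
  intros P [eps HP]. pose proof (cond_pos eps) as Heps. pose proof PI2_3_2.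
  set (eta := PI * r * eps ^ 2 / (K - a)).
  assert (Heta : 0 < eta)
    by (apply Rdiv_lt_0_compat; [apply Rmult_lt_0_compat; [nra|apply pow_lt; lra]|lra]).
  assert (Hphi : locally 0
    (fun T => (1 + K * T) ^ 2 * J0 a r k0 / (1 - k0 * T) ^ 2 - J0 a r k0 < eta)).
  { apply (locally_lt_of_continuous
             (fun T => (1 + K * T) ^ 2 * J0 a r k0 / (1 - k0 * T) ^ 2 - J0 a r k0));
      [|replace (_ - _) with 0 by (field; lra); lra].
    apply (ex_derive_continuous (K := R_AbsRing) (V := R_NormedModule)).
    auto_derive. rewrite Rmult_0_r. apply Rgt_not_eq. lra. }
  change (at_right 0 (fun T => P (kopt T))).
  eapply filter_imp; [|exact (filter_and _ _ kopt_deviation_le (filter_le_within _ _ Hphi))].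
  intros T [Hdev Hsmall]. apply HP. change (Rabs (kopt T - k0) < eps).
  assert (Hsq : (kopt T - k0) ^ 2 < eps ^ 2).
  { assert (PI * r * (kopt T - k0) ^ 2 / (K - a) < PI * r * eps ^ 2 / (K - a)) by (fold eta; lra).
    apply Rmult_lt_reg_r with (/ (K - a)); [apply Rinv_0_lt_compat; lra|].
    apply Rmult_lt_reg_l with (PI * r); [nra|]. unfold Rdiv in *. lra. }
  rewrite <- (pow2_abs (kopt T - k0)) in Hsq. pose proof (Rabs_pos (kopt T - k0)). nra.
Qed.

End OptimalGain.

Theorem proposition5 (a r : R) (hr : 0 < r) (kopt : R -> R)
  (hkopt : forall T, 0 < T -> a * T < 1 ->
     a < kopt T < k_u a T /\
     (forall k, a < k < k_u a T -> J_T a r T (kopt T) <= J_T a r T k)) :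
  filterlim
    (fun T => kopt T / (kopt0 a r - (a * kopt0 a r + / r) * T))
    (at_right 0) (locally 1).
Proof.
  destruct (kopt0_gt a r hr) as [_ Hk0].
  set (k0 := kopt0 a r) in *.
  set (b := a * k0 + / r).
  apply (filterlim_comp_2 (G := locally k0) (H := locally (/ k0))
           kopt (fun T => / (k0 - b * T)) Rmult).
  - exact (kopt_cvg a r kopt hr hkopt).
  - apply (filterlim_filter_le_1 _ (filter_le_within _)).
    replace (/ k0) with (/ (k0 - b * 0)) by (f_equal; ring).
    apply (ex_derive_continuous (K := R_AbsRing) (V := R_NormedModule)
             (fun T => / (k0 - b * T))).
    auto_derive. lra.
  - replace 1 with (mult k0 (/ k0)) by (unfold mult; simpl; field; lra).
    apply (filterlim_mult (K := R_AbsRing)).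
Qed.
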